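(* Every cycle graph $C_n$ with $n>3$ vertices is a skeleton.
   Context: For simple graphs $G$ and $H$, $H$ is a skeletal of $G$ if there is a surjective map $\phi:V(G)\to V(H)$ such that for all distinct vertices $a,b$ of $G$: $a$ and $b$ are adjacent in $G$ if and only if $\phi(a)=\phi(b)$ or $\phi(a)$ and $\phi(b)$ are adjacent in $H$. A skeletal $H$ of $G$ under $\phi$ is proper if $|\phi^{-1}(v)|\ge 2$ for at least one vertex $v$ of $H$. A graph is a skeleton if it has no proper skeletal. *)

From mathcomp Require Import all_boot.
Set Implicit Arguments. Unset Strict Implicit. Unset Printing Implicit Defensive.

Definition simple_graph (V : Type) (e : V -> V -> Prop) : Prop :=
  (forall x, ~ e x x) /\ (forall x y, e x y -> e y x).

Definition skeletal_under (V U : Type) (eG : V -> V -> Prop) (eH : U -> U -> Prop)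
  (phi : V -> U) : Prop :=
  (forall u : U, exists v : V, phi v = u) /\
  (forall a b : V, a <> b -> (eG a b <-> (phi a = phi b \/ eH (phi a) (phi b)))).

Definition proper_skeletal_under (V U : Type) (eG : V -> V -> Prop) (eH : U -> U -> Prop)
  (phi : V -> U) : Prop :=
  skeletal_under eG eH phi /\ exists a b : V, a <> b /\ phi a = phi b.

Definition skeleton (V : Type) (eG : V -> V -> Prop) : Prop :=
  forall (U : Type) (eH : U -> U -> Prop) (phi : V -> U),
    simple_graph eH -> ~ proper_skeletal_under eG eH phi.

Definition cycle_adj (n : nat) (i j : 'I_n) : Prop :=
  (val j = (val i).+1 %% n) \/ (val i = (val j).+1 %% n).

From mathcomp Require Import all_boot.
Set Implicit Arguments. Unset Strict Implicit. Unset Printing Implicit Defensive.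

(* Vertices of a skeletal that share an image under [phi] are adjacent true
   twins of G.  In C_n with n > 3 no two vertices are true twins: if y follows
   x on the cycle, the predecessor of x is adjacent to x but not to y. *)

Definition true_twins (V : Type) (e : V -> V -> Prop) (a b : V) : Prop :=
  e a b /\ forall c, c <> a -> c <> b -> (e c a <-> e c b).

Lemma skeletal_fibre_true_twins (V U : Type) (eG : V -> V -> Prop)
    (eH : U -> U -> Prop) (phi : V -> U) (a b : V) :
  skeletal_under eG eH phi -> a <> b -> phi a = phi b -> true_twins eG a b.
Proof.
move=> [_ skel] neq_ab phi_ab; split; first exact: (skel a b neq_ab).2 (or_introl phi_ab).
move=> c neq_ca neq_cb.
have := skel c a neq_ca; have := skel c b neq_cb.
by rewrite phi_ab; tauto.
Qed.

Lemma skeleton_of_no_true_twins (V : Type) (e : V -> V -> Prop) :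
  (forall a b : V, a <> b -> ~ true_twins e a b) -> skeleton e.
Proof.
move=> no_twins U eH phi _ [skel [a [b [neq_ab phi_ab]]]].
exact: no_twins neq_ab (skeletal_fibre_true_twins skel neq_ab phi_ab).
Qed.

Section CycleGraph.

Variable n : nat.

Lemma cycle_adjE (i j : 'I_n) : cycle_adj i j <-> j = ordS i \/ i = ordS j.
Proof.
split=> [[ji | ij] | [-> | ->]]; rewrite /cycle_adj /=; try by [left | right].
- by left; apply: val_inj.
- by right; apply: val_inj.
Qed.

Lemma val_iter_ordS (k : nat) (i : 'I_n) : val (iter k (@ordS n) i) = (i + k) %% n.
Proof.
elim: k => [|k IHk] /=; first by rewrite addn0 modn_small.
by rewrite IHk addnS -addn1 modnDml addn1.
Qed.

Lemma iter_ordS_neq (k : nat) (i : 'I_n) : 0 < k < n -> iter k (@ordS n) i <> i.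
Proof.
case/andP=> k_gt0 lt_kn /(congr1 val); rewrite val_iter_ordS => fix_i.
have : i + k == i + 0 %[mod n] by rewrite addn0 fix_i modn_small.
by rewrite eqn_modDl mod0n modn_small // => /eqP k0; rewrite k0 in k_gt0.
Qed.

Hypothesis n_gt3 : 3 < n.

Lemma cycle_pred_separates (x : 'I_n) :
  let c := ord_pred x in
  [/\ c <> x, c <> ordS x, cycle_adj c x & ~ cycle_adj c (ordS x)].
Proof.
move=> c; have c_to_x : ordS c = x by rewrite ord_predK.
have iter_neq k : 0 < k < n -> iter k (@ordS n) c <> c by apply: iter_ordS_neq.
have c_neq_x : c <> x.
  by rewrite -c_to_x => /esym; apply: (iter_neq 1); rewrite /= ltnW // ltnW.
split=> //.
- by rewrite -c_to_x => /esym; apply: (iter_neq 2); rewrite /= ltnW.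
- by apply/cycle_adjE; left.
- case/cycle_adjE=> [/ordS_inj x_eq_c | c_fix]; first exact: c_neq_x.
  by apply: (iter_neq 3); rewrite /= ?n_gt3 // c_to_x -c_fix.
Qed.

Lemma cycle_no_true_twins (a b : 'I_n) : ~ true_twins (@cycle_adj n) a b.
Proof.
move=> [/cycle_adjE [-> | ->] twins].
- have [c_neq_a c_neq_b c_adj_a c_nadj_b] := cycle_pred_separates a.
  exact: c_nadj_b ((twins _ c_neq_a c_neq_b).1 c_adj_a).
- have [c_neq_b c_neq_a c_adj_b c_nadj_a] := cycle_pred_separates b.
  exact: c_nadj_a ((twins _ c_neq_a c_neq_b).2 c_adj_b).
Qed.

End CycleGraph.

Theorem mainTheorem5 (n : nat) (hn : 3 < n) : skeleton (@cycle_adj n).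
Proof.
apply: skeleton_of_no_true_twins => a b _.
exact: cycle_no_true_twins.
Qed.
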